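(* Let $A$ be a real $m\times n$ matrix, $\mathbf b\in\mathbb R^m$, $\mathbf c\in\mathbb R^n$ (row vector), such that the linear program $\max\mathbf c\mathbf x$ s.t. $A\mathbf x\le\mathbf b$, $\mathbf x\ge0$ has unique optimal primal and dual solutions $\mathbf x^*$ and $\mathbf y^*$. Let $\lambda=\min(\alpha_P,\alpha_D,\beta_P,\beta_D)$. Then \[ \delta(A,\mathbf b,\mathbf c)\ \ge\ \frac{\lambda^2\,\gamma}{2\max(1,\sqrt n\|A\|)\,(1+\|A\|)}. \]
   Context: The dual is $\min\mathbf y\mathbf b$ s.t. $\mathbf yA\ge\mathbf c$, $\mathbf y\ge0$. $U=\{i:x^*_i>0\}$, $V=\{j:y^*_j>0\}$, $\bar U,\bar V$ their complements. Define $\alpha_P=\min_{i\in U}x^*_i$, $\alpha_D=\min_{j\in V}y^*_j$, $\beta_P=\min_{j\in\bar V}(b_j-A_{j,:}\mathbf x^* )$, $\beta_D=\min_{i\in\bar U}(\mathbf y^*A_{:,i}-c_i)$, and $\gamma=\min_{k\in U}\mathrm{dist}(A_{V,k},\mathrm{span}(A_{V,U\setminus\{k\}}))$, where $A_{V,k}$ is column $k$ restricted to rows in $V$ and $\mathrm{span}(A_{V,U\setminus\{k\}})$ is the span of the columns indexed by $U\setminus\{k\}$ restricted to rows $V$. $\|A\|$ is the spectral norm. For a primal feasible $\mathbf x$, $U(\mathbf x)$ and $V(\mathbf x)$ are the index sets such that $\{x_i:i\notin U(\mathbf x)\}\cup\{b_j-A_{j,:}\mathbf x:j\in V(\mathbf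 x)\}$ are the $n$ smallest values among $\{x_i\}\cup\{b_j-A_{j,:}\mathbf x\}$. $\delta(A,\mathbf b,\mathbf c)$ is the supremum of those $\delta$ such that for every primal feasible $\mathbf x$, $\mathbf c\mathbf x^*-\mathbf c\mathbf x<\delta$ implies $U(\mathbf x)=U$ and $V(\mathbf x)=V$. *)

From HB Require Import structures.
From mathcomp Require Import all_boot all_order all_algebra.
From mathcomp Require Import boolp classical_sets reals constructive_ereal ereal.
Set Implicit Arguments. Unset Strict Implicit. Unset Printing Implicit Defensive.
Import Order.TTheory GRing.Theory Num.Theory.
Local Open Scope ring_scope.
Local Open Scope classical_set_scope.

Section LP.
Variables (R : realType) (m n : nat).
Variables (A : 'M[R]_(m, n)) (b : 'cV[R]_m) (c : 'rV[R]_n).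

Definition cx (x : 'cV[R]_n) : R := \sum_i c 0 i * x i 0.
Definition yb (y : 'rV[R]_m) : R := \sum_j y 0 j * b j 0.

Definition primal_feasible (x : 'cV[R]_n) : Prop :=
  (forall j, \sum_i A j i * x i 0 <= b j 0) /\ (forall i, 0 <= x i 0).
Definition primal_optimal (x : 'cV[R]_n) : Prop :=
  primal_feasible x /\ forall x', primal_feasible x' -> cx x' <= cx x.

Definition dual_feasible (y : 'rV[R]_m) : Prop :=
  (forall i, c 0 i <= \sum_j y 0 j * A j i) /\ (forall j, 0 <= y 0 j).
Definition dual_optimal (y : 'rV[R]_m) : Prop :=
  dual_feasible y /\ forall y', dual_feasible y' -> yb y <= yb y'.

Definition slack (x : 'cV[R]_n) (j : 'I_m) : R := b j 0 - \sum_i A j i * x i 0.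
Definition dslack (y : 'rV[R]_m) (i : 'I_n) : R := \sum_j y 0 j * A j i - c 0 i.

Definition Uset (xs : 'cV[R]_n) : {set 'I_n} := [set i | 0 < xs i 0].
Definition Vset (ys : 'rV[R]_m) : {set 'I_m} := [set j | 0 < ys 0 j].

(* minimum of a finite list of reals (0 for the empty list) *)
Definition minR (s : seq R) : R :=
  if s is x :: s' then foldr Num.min x s' else 0.

(* lambda = min(alpha_P, alpha_D, beta_P, beta_D), where a minimum over an
   empty index set is +oo (i.e. contributes nothing) *)
Definition lambdaLP (xs : 'cV[R]_n) (ys : 'rV[R]_m) : R :=
  minR ([seq xs i 0 | i in Uset xs] ++ [seq ys 0 j | j in Vset ys] ++
        [seq slack xs j | j in ~: Vset ys] ++ [seq dslack ys i | i in ~: Uset xs]).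

Definition distVk (U : {set 'I_n}) (V : {set 'I_m}) (k : 'I_n) : R :=
  inf (range (fun t : 'I_n -> R =>
     Num.sqrt (\sum_(j in V)
        (A j k - \sum_(i in U :\ k) t i * A j i) ^+ 2))).

Definition gammaLP (xs : 'cV[R]_n) (ys : 'rV[R]_m) : R :=
  minR [seq distVk (Uset xs) (Vset ys) k | k in Uset xs].

Definition norm2 (p : nat) (x : 'cV[R]_p) : R := Num.sqrt (\sum_i x i 0 ^+ 2).
Definition specnorm : R :=
  sup [set norm2 (A *m x) | x in [set x : 'cV[R]_n | norm2 x = 1]].

(* U(x) = U and V(x) = V: the n values {x_i : i notin U} u {b_j - A_j x : j in V}
   are the n smallest among {x_i} u {b_j - A_j x} (strictly, so that U(x),V(x)
   are well defined). *)
Definition lp_value (x : 'cV[R]_n) (s : 'I_n + 'I_m) : R :=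
  match s with inl i => x i 0 | inr j => slack x j end.
Definition selected (U : {set 'I_n}) (V : {set 'I_m}) (s : 'I_n + 'I_m) : bool :=
  match s with inl i => i \notin U | inr j => j \in V end.
Definition UV_of_is (x : 'cV[R]_n) (U : {set 'I_n}) (V : {set 'I_m}) : Prop :=
  (#|~: U| + #|V| = n)%N /\
  forall s t, selected U V s -> ~~ selected U V t -> lp_value x s < lp_value x t.

Definition delta_set (xs : 'cV[R]_n) (ys : 'rV[R]_m) : set R :=
  [set d : R | forall x, primal_feasible x -> cx xs - cx x < d ->
               UV_of_is x (Uset xs) (Vset ys)].
Definition deltaLP (xs : 'cV[R]_n) (ys : 'rV[R]_m) : \bar R :=
  ereal_sup [set d%:E | d in delta_set xs ys].

End LP.

(* Complementary slackness turns the duality gap [c xs - c x] of a feasible [x]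
   into a weighted sum of the values [x_i] (i not in U) and [b_j - A_j x]
   (j in V), each weight being at least [lambda]; so these values sum to at most
   gap / lambda.  On the rows V the deviation satisfies
   [A_{V,U} (x - xs)_U = - (b - A x)_V - A_{V,~U} x_{~U}], and [gamma] bounds
   each [|x_k - xs_k|] (k in U) by that residual, so [x] moves by at most
   [(1 + ||A||) gap / (lambda gamma)] in every coordinate.  Below the stated gap
   the selected values thus stay under [lambda / 2] while the others, which are
   at least [lambda] at [xs], stay above it.  That the selected values are
   exactly n follows from |U| = |V|: [gamma > 0] makes the columns of [A_{V,U}]
   independent, and uniqueness of [ys] makes its rows independent.  Strong
   duality comes from Farkas' lemma, proved by Fourier-Motzkin elimination. *)

From HB Require Import structures.
From mathcomp Require Import all_boot all_order all_algebra.
From mathcomp Require Import boolp classical_sets reals constructive_ereal ereal.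
From mathcomp Require Import lra ring.
Set Implicit Arguments. Unset Strict Implicit. Unset Printing Implicit Defensive.
Import Order.TTheory GRing.Theory Num.Theory.
Local Open Scope ring_scope.

Section FourierMotzkin.
Variables (R : realFieldType) (I : finType) (a : I -> R).

Definition opposite_signs (p q : I) : bool := (0 < a p) && (a q < 0).

(* The rows of the system after eliminating the variable with coefficients [a]:
   rows with [a r = 0] are kept, and each pair [a p > 0 > a q] is combined
   so that the coefficient of that variable cancels. *)
Definition fm_row (g : I -> R) (s : I + I * I) : R :=
  match s with
  | inl r => if a r == 0 then g r else 0
  | inr (p, q) => if opposite_signs p q then - a q * g p + a p * g q else 0
  end.

Definition fm_pullback (y : I + I * I -> R) (r : I) : R :=
  (if a r == 0 then y (inl r) else 0) +
  \sum_q (if opposite_signs r q then y (inr (r, q)) * - a q else 0) +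
  \sum_p (if opposite_signs p r then y (inr (p, r)) * a p else 0).

Lemma fm_pullback_ge0 y : (forall s, 0 <= y s) -> forall r, 0 <= fm_pullback y r.
Proof.
move=> y_ge0 r; apply: addr_ge0; first apply: addr_ge0.
- by case: ifP.
- apply: sumr_ge0 => q _; case: ifP => // /andP[_ aq_lt0].
  by rewrite mulr_ge0 // oppr_ge0 ltW.
- apply: sumr_ge0 => p _; case: ifP => // /andP[ap_gt0 _].
  by rewrite mulr_ge0 // ltW.
Qed.

Lemma sum_fm_pullback y g :
  \sum_r fm_pullback y r * g r = \sum_s y s * fm_row g s.
Proof.
pose F p q := y (inr (p, q)) * fm_row g (inr (p, q)).
rewrite big_sumType /= [X in _ + X](eq_bigr (fun pq => F pq.1 pq.2)); last by case.
rewrite -(pair_bigA _ F) /= {}/F.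
under eq_bigr do rewrite !mulrDl.
rewrite !big_split /= -addrA; congr (_ + _).
  by apply: eq_bigr => r _; case: ifP; rewrite ?mul0r ?mulr0.
have -> : \sum_p \sum_q y (inr (p, q)) * fm_row g (inr (p, q)) =
  \sum_p \sum_q (if opposite_signs p q then y (inr (p, q)) * - a q * g p else 0) +
  \sum_p \sum_q (if opposite_signs p q then y (inr (p, q)) * a p * g q else 0).
  rewrite -big_split; apply: eq_bigr => p _; rewrite -big_split; apply: eq_bigr => q _ /=.
  by case: ifP; rewrite ?mulr0 ?addr0 // mulrDr !mulrA.
congr (_ + _).
  by apply: eq_bigr => p _; rewrite mulr_suml; apply: eq_bigr => q _; case: ifP; rewrite ?mul0r.
rewrite exchange_big; apply: eq_bigr => q _; rewrite mulr_suml.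
by apply: eq_bigr => p _; case: ifP; rewrite ?mul0r.
Qed.

End FourierMotzkin.

Section Farkas.
Variable R : realFieldType.

Lemma exists_between (I : finType) (P Q : pred I) (L : I -> R) :
  (forall p q, P p -> Q q -> L q <= L p) ->
  exists t, (forall p, P p -> t <= L p) /\ (forall q, Q q -> L q <= t).
Proof.
move=> LQP; have [[q0 Qq0]|noQ] := pselect (exists q, Q q).
  case: (arg_maxP L Qq0) => q Qq maxq.
  by exists (L q); split=> [p Pp|]; [exact: LQP|].
exists (- \sum_i `|L i|); split=> [p _|q Qq]; last by case: noQ; exists q.
rewrite lerNl (bigD1 p) //= -normrN (le_trans (ler_norm _)) // lerDl.
exact: sumr_ge0.
Qed.

Lemma fm_infeasible (I : finType) (M : I -> nat -> R) (v : I -> R) n :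
  (forall x : nat -> R, exists r, v r < \sum_(k < n.+1) M r k * x k) ->
  forall x : nat -> R,
    exists s, fm_row (M^~ n) v s < \sum_(k < n) fm_row (M^~ n) (M^~ k) s * x k.
Proof.
(* A solution [x] of the eliminated system extends by any [t] lying between
   the lower bounds [L q] and the upper bounds [L p] on the last variable. *)
set a := M^~ n => infeasible x; apply: contrapT => /forallNP feasible.
have {}feasible s : \sum_(k < n) fm_row a (M^~ k) s * x k <= fm_row a v s.
  by rewrite leNgt; apply/negP => ?; apply: (feasible s).
pose e r := \sum_(k < n) M r k * x k.
pose L r := (v r - e r) / a r.
have zero_row r : a r = 0 -> e r <= v r.
  by move=> ar0; have := feasible (inl r); rewrite /= ar0 eqxx.
have pair_row p q : 0 < a p -> a q < 0 -> L q <= L p.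
  move=> ap_gt0 aq_lt0; have := feasible (inr (p, q)).
  rewrite /= /opposite_signs ap_gt0 aq_lt0 /=.
  under eq_bigr do rewrite mulrDl -!mulrA.
  rewrite big_split /= -!mulr_sumr -/(e p) -/(e q) => h.
  rewrite /L ler_ndivrMr // mulrAC ler_pdivrMr //; nra.
have [t [t_leL L_let]] := exists_between pair_row.
have [r] := infeasible (fun k => if (k < n)%N then x k else t).
rewrite big_ord_recr /= ltnn.
under eq_bigr => k _ do rewrite ltn_ord.
rewrite -/(e r) -/(a r); case: (ltgtP (a r) 0) => ar.
- by have := L_let r ar; rewrite /L ler_ndivrMr // mulrC; lra.
- by have := t_leL r ar; rewrite /L ler_pdivlMr // mulrC; lra.
- by rewrite ar mul0r addr0 ltNge zero_row.
Qed.

Lemma farkas_nat n (I : finType) (M : I -> nat -> R) (v : I -> R) :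
  (forall x : nat -> R, exists r, v r < \sum_(k < n) M r k * x k) ->
  exists y : I -> R, [/\ forall r, 0 <= y r,
    forall k, (k < n)%N -> \sum_r y r * M r k = 0 & \sum_r y r * v r < 0].
Proof.
elim: n I M v => [|n IHn] I M v infeasible.
  have [r] := infeasible (fun _ => 0); rewrite big_ord0 => vr_lt0.
  exists (fun s => (s == r)%:R); split=> //.
  rewrite (bigD1 r) //= eqxx mul1r big1 ?addr0 // => s /negbTE->.
  by rewrite mul0r.
pose a r := M r n.
have [y [y_ge0 yM yv]] :=
  IHn _ (fun s k => fm_row a (M^~ k) s) _ (fm_infeasible infeasible).
exists (fm_pullback a y); split.
- exact: fm_pullback_ge0.
- move=> k; rewrite ltnS leq_eqVlt => /predU1P[->|lt_kn].
    rewrite (sum_fm_pullback a y a) big1 // => -[r|[p q]] _ /=.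
      by case: eqP => [->|]; rewrite mulr0.
    by case: ifP; rewrite ?mulr0 // mulNr [a q * _]mulrC addNr mulr0.
  by rewrite (sum_fm_pullback a y (M^~ k)) yM.
- by rewrite (sum_fm_pullback a y v).
Qed.

Lemma farkas n (I : finType) (M : I -> 'I_n -> R) (v : I -> R) :
  (forall x : 'I_n -> R, exists r, v r < \sum_i M r i * x i) ->
  exists y : I -> R, [/\ forall r, 0 <= y r,
    forall i, \sum_r y r * M r i = 0 & \sum_r y r * v r < 0].
Proof.
move=> infeasible; pose Mn r k := oapp (M r) 0 (insub k).
have MnE r (i : 'I_n) : Mn r i = M r i by rewrite /Mn valK.
have [|y [y_ge0 yM yv]] := @farkas_nat n I Mn v.
  move=> x; have [r vr] := infeasible (fun i => x i).
  by exists r; under eq_bigr do rewrite MnE.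
exists y; split=> // i; rewrite -[RHS](yM i (ltn_ord i)).
by apply: eq_bigr => r _; rewrite MnE.
Qed.

End Farkas.

Section WeakDuality.
Variables (R : realType) (m n : nat).
Variables (A : 'M[R]_(m, n)) (b : 'cV[R]_m) (c : 'rV[R]_n).

Lemma duality_gap (x : 'cV[R]_n) (y : 'rV[R]_m) :
  yb b y - cx c x = \sum_j y 0 j * slack A b x j + \sum_i dslack A c y i * x i 0.
Proof.
rewrite /slack /dslack /yb /cx.
under [X in _ = X + _]eq_bigr do rewrite mulrBr.
under [X in _ = _ + X]eq_bigr do rewrite mulrBl.
rewrite !sumrB.
have -> : \sum_j y 0 j * (\sum_i A j i * x i 0) = \sum_i (\sum_j y 0 j * A j i) * x i 0.
  under eq_bigr do rewrite mulr_sumr.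
  rewrite exchange_big; apply: eq_bigr => i _; rewrite mulr_suml.
  by apply: eq_bigr => j _; rewrite mulrA.
by rewrite addrA subrK.
Qed.

Lemma slack_ge0 x : primal_feasible A b x -> forall j, 0 <= slack A b x j.
Proof. by case=> Ax_le_b _ j; rewrite subr_ge0. Qed.

Lemma dslack_ge0 y : dual_feasible A c y -> forall i, 0 <= dslack A c y i.
Proof. by case=> c_le_yA _ i; rewrite subr_ge0. Qed.

Lemma weak_duality x y : primal_feasible A b x -> dual_feasible A c y ->
  cx c x <= yb b y.
Proof.
move=> fx fy; rewrite -subr_ge0 duality_gap.
apply: addr_ge0; apply: sumr_ge0 => k _; apply: mulr_ge0.
- by case: fy.
- exact: slack_ge0.
- exact: dslack_ge0.
- by case: fx.
Qed.

End WeakDuality.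

Section StrongDuality.
Variables (R : realType) (m n : nat).
Variables (A : 'M[R]_(m, n)) (b : 'cV[R]_m) (c : 'rV[R]_n).

Lemma dual_feasible_of_scaled xs (z : 'rV[R]_m) w t : primal_feasible A b xs ->
  (forall j, 0 <= z 0 j) -> 0 <= w -> (forall i, w * c 0 i <= \sum_j z 0 j * A j i) ->
  yb b z < w * t -> exists2 y, dual_feasible A c y & yb b y < t.
Proof.
move=> fxs z_ge0 w_ge0 zA zb.
(* For [w = 0], weak duality with objective [0] gives [0 <= yb b z < 0]. *)
have w_gt0 : 0 < w.
  rewrite lt_def w_ge0 andbT; apply/eqP => w0.
  have fz : dual_feasible A 0 z.
    by split=> [i|//]; rewrite mxE; have := zA i; rewrite w0 mul0r.
  have := weak_duality fxs fz; rewrite /cx big1 => [|i _]; last by rewrite mxE mul0r.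
  by move: zb; rewrite w0 mul0r; lra.
exists (w^-1 *: z).
  split=> [i|j]; last by rewrite mxE mulr_ge0 // invr_ge0.
  by under eq_bigr do rewrite mxE -mulrA; rewrite -mulr_sumr ler_pdivlMl.
rewrite /yb; under eq_bigr do rewrite mxE -mulrA; rewrite -mulr_sumr.
by rewrite ltr_pdivrMl // -/(yb b z).
Qed.

(* Farkas' lemma applied to the infeasible system
   [A x <= b, - x <= 0, - c x <= - (c xs + e)]. *)
Lemma dual_value_lt xs e : primal_optimal A b c xs -> 0 < e ->
  exists2 y, dual_feasible A c y & yb b y < cx c xs + e.
Proof.
move=> [fxs opt_xs] e_gt0.
pose M (r : ('I_m + 'I_n) + 'I_1) i := match r with
  | inl (inl j) => A j i | inl (inr k) => if k == i then -1 else 0 | inr _ => - c 0 i end.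
pose v (r : ('I_m + 'I_n) + 'I_1) := match r with
  | inl (inl j) => b j 0 | inl (inr _) => 0 | inr _ => - (cx c xs + e) end.
have sum_rows (F : ('I_m + 'I_n) + 'I_1 -> R) :
    \sum_r F r = \sum_j F (inl (inl j)) + \sum_k F (inl (inr k)) + F (inr ord0).
  by rewrite !big_sumType /= big_ord1.
have [|y [y_ge0 yM yv]] := @farkas _ _ _ M v.
  move=> x; apply: contrapT => /forallNP feasible.
  have {}feasible r : \sum_i M r i * x i <= v r.
    by rewrite leNgt; apply/negP => ?; apply: (feasible r).
  pose xv : 'cV[R]_n := \col_i x i.
  have fx : primal_feasible A b xv.
    split=> [j|k]; first by under eq_bigr do rewrite mxE; exact: (feasible (inl (inl j))).
    have := feasible (inl (inr k)); rewrite /= (bigD1 k) //= eqxx big1 ?addr0.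
      by rewrite mxE mulN1r oppr_le0.
    by move=> i /negbTE; rewrite eq_sym => ->; rewrite mul0r.
  have := feasible (inr ord0); under eq_bigr do rewrite /= mulNr.
  rewrite sumrN lerN2 => cx_ge.
  have := opt_xs _ fx; rewrite [cx c xv]/cx; under eq_bigr do rewrite mxE.
  lra.
pose z : 'rV[R]_m := \row_j y (inl (inl j)).
have zE j : z 0 j = y (inl (inl j)) by rewrite mxE.
apply: (dual_feasible_of_scaled (z := z) fxs _ (y_ge0 (inr ord0))) => [j|i|].
- by rewrite zE.
- under eq_bigr do rewrite zE.
  have := yM i; rewrite sum_rows (bigD1 i) //= eqxx [\sum_(k | k != i) _]big1 => [|k /negbTE].
    by have := y_ge0 (inl (inr i)); lra.
  by rewrite eq_sym => ->; rewrite mulr0.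
- rewrite /yb; under eq_bigr do rewrite zE.
  move: yv; rewrite sum_rows [X in _ + X + _]big1 /= => [|k _]; last by rewrite mulr0.
  lra.
Qed.

Lemma strong_duality xs ys : primal_optimal A b c xs -> dual_optimal A b c ys ->
  yb b ys = cx c xs.
Proof.
move=> opt_xs [fys opt_ys]; apply/eqP; rewrite eq_le.
rewrite (weak_duality opt_xs.1 fys) andbT; apply/ler_addgt0Pr => e e_gt0.
have [y fy y_lt] := dual_value_lt opt_xs e_gt0.
exact: le_trans (opt_ys _ fy) (ltW y_lt).
Qed.

End StrongDuality.

Section SumOfSquares.
Variables (R : realType) (I : finType) (P : pred I).
Implicit Types f g : I -> R.

Lemma sumsq_ge0 f : 0 <= \sum_(i | P i) f i ^+ 2.
Proof. by apply: sumr_ge0 => i _; apply: sqr_ge0. Qed.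

Lemma sqr_le_sumsq f j : P j -> f j ^+ 2 <= \sum_(i | P i) f i ^+ 2.
Proof.
by move=> Pj; rewrite (bigD1 j) //= lerDl; apply: sumr_ge0 => i _; apply: sqr_ge0.
Qed.

Lemma abs_le_sqrt_sumsq f j : P j -> `|f j| <= Num.sqrt (\sum_(i | P i) f i ^+ 2).
Proof. by move=> Pj; rewrite -sqrtr_sqr ler_sqrt ?sumsq_ge0 // sqr_le_sumsq. Qed.

Lemma sumsq_eq0 f : \sum_(i | P i) f i ^+ 2 = 0 -> forall j, P j -> f j = 0.
Proof.
move=> sum0 j Pj; apply/eqP; rewrite -sqrf_eq0 eq_le sqr_ge0 andbT.
by rewrite -sum0 sqr_le_sumsq.
Qed.

Lemma sumsq_subset (Q : pred I) f : (forall i, Q i -> P i) ->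
  \sum_(i | Q i) f i ^+ 2 <= \sum_(i | P i) f i ^+ 2.
Proof.
move=> QP; rewrite [X in _ <= X](bigID Q) /=.
rewrite [X in _ <= X + _](eq_bigl Q) => [|i]; last first.
  by case Qi: (Q i); rewrite ?andbT ?andbF ?(QP i Qi).
by rewrite lerDl; apply: sumr_ge0 => i _; apply: sqr_ge0.
Qed.

Lemma cauchy_schwarz f g :
  (\sum_(i | P i) f i * g i) ^+ 2 <=
  (\sum_(i | P i) f i ^+ 2) * (\sum_(i | P i) g i ^+ 2).
Proof.
set F := \sum_(i | P i) f i ^+ 2; set G := \sum_(i | P i) g i ^+ 2.
set H := \sum_(i | P i) f i * g i.
have [F0|F_neq0] := eqVneq F 0.
  suff -> : H = 0 by rewrite F0 expr0n mul0r.
  by rewrite /H big1 // => i Pi; rewrite (sumsq_eq0 F0 Pi) mul0r.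
have F_gt0 : 0 < F by rewrite lt_def F_neq0 sumsq_ge0.
have : 0 <= \sum_(i | P i) (H * f i - F * g i) ^+ 2 by apply: sumsq_ge0.
have -> : \sum_(i | P i) (H * f i - F * g i) ^+ 2 = F * (F * G - H ^+ 2).
  have -> : \sum_(i | P i) (H * f i - F * g i) ^+ 2 =
      \sum_(i | P i) (H ^+ 2 * f i ^+ 2 - (2 * H * F) * (f i * g i) + F ^+ 2 * g i ^+ 2).
    by apply: eq_bigr => i _; ring.
  rewrite big_split /= sumrB -!mulr_sumr -/F -/G -/H; ring.
by rewrite pmulr_rge0 // subr_ge0.
Qed.

Lemma minkowski f g :
  Num.sqrt (\sum_(i | P i) (f i + g i) ^+ 2) <=
  Num.sqrt (\sum_(i | P i) f i ^+ 2) + Num.sqrt (\sum_(i | P i) g i ^+ 2).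
Proof.
set F := \sum_(i | P i) f i ^+ 2; set G := \sum_(i | P i) g i ^+ 2.
set H := \sum_(i | P i) f i * g i.
have F_ge0 : 0 <= F := sumsq_ge0 f; have G_ge0 : 0 <= G := sumsq_ge0 g.
have sumE : \sum_(i | P i) (f i + g i) ^+ 2 = F + 2 * H + G.
  rewrite mulr_sumr -!big_split /=.
  by apply: eq_bigr => i _; ring.
have H_le : H <= Num.sqrt F * Num.sqrt G.
  rewrite -sqrtrM // (le_trans (ler_norm H)) // -sqrtr_sqr ler_sqrt ?mulr_ge0 //.
  exact: cauchy_schwarz.
rewrite -(@ler_pXn2r _ 2) // ?nnegrE ?sqrtr_ge0 ?addr_ge0 ?sqrtr_ge0 //.
rewrite sqr_sqrtr ?sumsq_ge0 // sumE.
by rewrite sqrrD !sqr_sqrtr //; lra.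
Qed.

Lemma sqrt_sumsq_le_sum f : (forall i, P i -> 0 <= f i) ->
  Num.sqrt (\sum_(i | P i) f i ^+ 2) <= \sum_(i | P i) f i.
Proof.
move=> f_ge0.
have [sum_ge0 sumsq_le] : 0 <= \sum_(i | P i) f i /\
    \sum_(i | P i) f i ^+ 2 <= (\sum_(i | P i) f i) ^+ 2.
  apply: (big_rec2 (fun s2 s => 0 <= s /\ s2 <= s ^+ 2)); first by rewrite expr0n.
  by move=> i s2 s Pi [s_ge0 s2_le]; have := f_ge0 i Pi; split; nra.
by rewrite -(ger0_norm sum_ge0) -sqrtr_sqr ler_sqrt ?sqr_ge0.
Qed.

End SumOfSquares.

Section EuclideanNorm.
Variable R : realType.

Lemma norm2_ge0 p (x : 'cV[R]_p) : 0 <= norm2 x.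
Proof. exact: sqrtr_ge0. Qed.

Lemma norm2Z p a (x : 'cV[R]_p) : norm2 (a *: x) = `|a| * norm2 x.
Proof.
rewrite /norm2; under eq_bigr do rewrite mxE exprMn.
by rewrite -mulr_sumr sqrtrM ?sqr_ge0 // sqrtr_sqr.
Qed.

Lemma norm2_eq0 p (x : 'cV[R]_p) : norm2 x = 0 -> x = 0.
Proof.
move/eqP; rewrite sqrtr_eq0 => sum_le0.
have sum0 : \sum_i x i 0 ^+ 2 = 0.
  by apply/eqP; rewrite eq_le sum_le0 (sumsq_ge0 xpredT).
by apply/matrixP => i j; rewrite ord1 mxE (sumsq_eq0 sum0).
Qed.

Lemma abs_entry_le_norm2 p (x : 'cV[R]_p) i : `|x i 0| <= norm2 x.
Proof. by apply: (abs_le_sqrt_sumsq (P := xpredT) (fun i => x i 0)). Qed.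

Lemma norm2_le_sqrt_dim p (x : 'cV[R]_p) B : (forall i, `|x i 0| <= B) ->
  norm2 x <= Num.sqrt p%:R * B.
Proof.
case: p x => [|p] x x_le; first by rewrite /norm2 big_ord0 sqrtr0 mul0r.
have B_ge0 : 0 <= B := le_trans (normr_ge0 _) (x_le ord0).
rewrite /norm2 -[B]ger0_norm // -sqrtr_sqr -sqrtrM ?ler0n // ler_sqrt ?mulr_ge0 ?ler0n ?sqr_ge0 //.
have -> : p.+1%:R * B ^+ 2 = \sum_(i < p.+1) B ^+ 2 by rewrite sumr_const card_ord mulr_natl.
apply: ler_sum => i _.
by rewrite -real_normK ?num_real // ler_sqr ?normr_ge0 ?x_le ?nnegrE.
Qed.

Local Open Scope classical_set_scope.
Variables (m n : nat) (A : 'M[R]_(m, n)).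
Local Notation image_of_sphere :=
  [set norm2 (A *m x) | x in [set x : 'cV[R]_n | norm2 x = 1]].

Lemma image_of_sphere_bounded : has_ubound image_of_sphere.
Proof.
exists (\sum_j \sum_i `|A j i|) => _ [x /= x1 <-].
apply: (@le_trans _ _ (\sum_j `|(A *m x) j 0|)).
  rewrite /norm2; under eq_bigr do rewrite -real_normK ?num_real //.
  exact: (sqrt_sumsq_le_sum (P := xpredT)).
apply: ler_sum => j _; rewrite mxE (le_trans (ler_norm_sum _ _ _)) //.
apply: ler_sum => i _; rewrite normrM ler_piMr //.
by rewrite -x1 abs_entry_le_norm2.
Qed.

Lemma specnorm_ge0 : 0 <= specnorm A.
Proof.
rewrite /specnorm; have [sup_ok|] := pselect (has_sup image_of_sphere); last first.
  by move=> ?; rewrite sup_out.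
have [[e Se] _] := sup_ok; apply: le_trans (sup_upper_bound sup_ok Se).
by case: Se => x _ <-; apply: norm2_ge0.
Qed.

Lemma norm2_mulmx_le z : norm2 (A *m z) <= specnorm A * norm2 z.
Proof.
have [z0|z_neq0] := eqVneq (norm2 z) 0.
  rewrite z0 mulr0 (norm2_eq0 z0) mulmx0 /norm2 big1 ?sqrtr0 // => i _.
  by rewrite mxE expr0n.
have z_gt0 : 0 < norm2 z by rewrite lt_def z_neq0 norm2_ge0.
pose u := (norm2 z)^-1 *: z.
have u1 : norm2 u = 1 by rewrite norm2Z ger0_norm ?invr_ge0 ?norm2_ge0 // mulVf.
have Su : image_of_sphere (norm2 (A *m u)) by exists u.
have sup_ok : has_sup image_of_sphere.
  by split; [exists (norm2 (A *m u)) | exact: image_of_sphere_bounded].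
have := sup_upper_bound sup_ok Su; rewrite -/(specnorm A) /u -scalemxAr norm2Z.
by rewrite ger0_norm ?invr_ge0 ?norm2_ge0 // mulrC -ler_pdivlMr ?invr_gt0 // invrK.
Qed.

Lemma col_norm_le_specnorm k : Num.sqrt (\sum_j A j k ^+ 2) <= specnorm A.
Proof.
pose e : 'cV[R]_n := \col_i (i == k)%:R.
have e1 : norm2 e = 1.
  rewrite /norm2 (bigD1 k) //= big1 ?mxE ?eqxx ?expr1n ?addr0 ?sqrtr1 //.
  by move=> i /negbTE ik; rewrite mxE ik expr0n.
have Ae j : (A *m e) j 0 = A j k.
  rewrite !mxE (bigD1 k) //= big1 ?mxE ?eqxx ?mulr1 ?addr0 //.
  by move=> i /negbTE ik; rewrite mxE ik mulr0.
have := norm2_mulmx_le e; rewrite e1 mulr1 /norm2.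
by under eq_bigr do rewrite Ae.
Qed.
End EuclideanNorm.

Lemma underdetermined_nontrivial_solution (R : fieldType) (I J : finType)
    (P : pred I) (Q : pred J) (B : J -> I -> R) : (#|Q| < #|P|)%N ->
  exists z : I -> R, [/\ exists2 i, P i & z i != 0, forall i, ~~ P i -> z i = 0
    & forall j, Q j -> \sum_(i | P i) B j i * z i = 0].
Proof.
move=> card_lt.
pose eP : 'I_#|P| -> I := enum_val; pose eQ : 'I_#|Q| -> J := enum_val.
pose M := \matrix_(a, b) B (eQ b) (eP a).
have [v vM0 v_neq0] : exists2 v : 'rV_#|P|, v *m M = 0 & v != 0.
  apply: contrapT => no_v.
  have : row_free M.
    by apply: inj_row_free => v vM0; apply/eqP/negPn/negP => v_neq0; apply: no_v; exists v.
  by rewrite -row_leq_rank leqNgt (leq_ltn_trans (rank_leq_col M)).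
pose z i := \sum_(a | eP a == i) v 0 a.
have zE a : z (eP a) = v 0 a.
  by rewrite /z (big_pred1 a) // => a'; apply/eqP/eqP => [/enum_val_inj|->].
have z_out i : ~~ P i -> z i = 0.
  move=> Pi; rewrite /z big_pred0 // => a; apply: contraNF Pi => /eqP <-.
  exact: enum_valP.
exists z; split=> //.
  by have /rV0Pn[a va] := v_neq0; exists (eP a); [exact: enum_valP | rewrite zE].
move=> j Qj; have {}Qj : j \in Q by [].
rewrite (eq_bigl (fun i => i \in P)) // big_enum_val /=.
under eq_bigr do rewrite zE mulrC.
have := congr1 (fun u : 'rV_#|Q| => u 0 (enum_rank_in Qj j)) vM0.
rewrite !mxE => vMj; rewrite -[RHS]vMj; apply: eq_bigr => a _.
by rewrite /M mxE /eQ enum_rankK_in.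
Qed.

Section MinR.
Variable R : realType.

Lemma foldr_min_le (x0 : R) s x : x \in x0 :: s -> foldr Num.min x0 s <= x.
Proof.
elim: s x => [|y s IHs] x /=; first by rewrite inE => /eqP->.
rewrite !inE ge_min => /or3P[/eqP->|/eqP->|xs].
- by rewrite IHs ?mem_head ?orbT.
- by rewrite lexx.
- by rewrite IHs ?inE ?xs ?orbT.
Qed.

Lemma minR_le (s : seq R) x : x \in s -> minR s <= x.
Proof. by case: s => [|y s] //; apply: foldr_min_le. Qed.

Lemma minR_ge0 (s : seq R) : (forall x, x \in s -> 0 <= x) -> 0 <= minR s.
Proof.
case: s => [|y s] //= s_ge0; elim: s s_ge0 => [|z s IHs] s_ge0 /=.
  by rewrite s_ge0 ?mem_head.
rewrite le_min s_ge0 ?inE ?eqxx ?orbT // IHs // => x.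
by rewrite inE => /orP[/eqP->|xs]; apply: s_ge0; rewrite !inE ?eqxx ?xs ?orbT.
Qed.

End MinR.

Lemma exists_small_scale (R : realFieldType) (I : finType) (f : I -> R) l : 0 < l ->
  exists2 eps, 0 < eps & forall i, eps * `|f i| <= l.
Proof.
move=> l_gt0; pose D := 1 + \sum_i `|f i|.
have D_gt0 : 0 < D by rewrite ltr_wpDr ?sumr_ge0.
exists (l / D) => [|i]; first by rewrite divr_gt0.
rewrite mulrAC ler_pdivrMr // ler_pM2l // /D (bigD1 i) //= addrCA lerDl.
by rewrite addr_ge0 ?sumr_ge0.
Qed.

Lemma ler_psum_term (R : numDomainType) (I : finType) (P : pred I) (f : I -> R) i :
  (forall j, P j -> 0 <= f j) -> P i -> f i <= \sum_(j | P j) f j.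
Proof.
move=> f_ge0 Pi; rewrite (bigD1 i) //= lerDl.
by apply: sumr_ge0 => j /andP[Pj _]; apply: f_ge0.
Qed.

Lemma pos_of_sqr_mul_pos (R : realDomainType) (l g : R) :
  0 <= l -> 0 < l ^+ 2 * g -> 0 < l /\ 0 < g.
Proof.
move=> l_ge0 lg_gt0; have g_gt0 : 0 < g.
  rewrite ltNge; apply: contraTN lg_gt0 => g_le0; rewrite -leNgt.
  by apply: mulr_ge0_le0 => //; apply: sqr_ge0.
split=> //; rewrite lt_def l_ge0 andbT; apply: contraTneq lg_gt0 => ->.
by rewrite expr0n mul0r ltxx.
Qed.

Lemma stability_denominator_gt0 (R : realType) m n (A : 'M[R]_(m, n)) :
  0 < 2 * Num.max 1 (Num.sqrt n%:R * specnorm A) * (1 + specnorm A).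
Proof.
have K_ge0 := specnorm_ge0 A.
have kappa_ge1 : 1 <= Num.max 1 (Num.sqrt n%:R * specnorm A) by rewrite le_max lexx.
by rewrite !mulr_gt0 //; lra.
Qed.

Section Stability.
Variables (R : realType) (m n : nat).
Variables (A : 'M[R]_(m, n)) (b : 'cV[R]_m) (c : 'rV[R]_n).
Variables (xs : 'cV[R]_n) (ys : 'rV[R]_m).
Hypothesis xs_opt : primal_optimal A b c xs.
Hypothesis ys_opt : dual_optimal A b c ys.

Local Notation U := (Uset xs).
Local Notation V := (Vset ys).
Local Notation lam := (lambdaLP A b c xs ys).
Local Notation gam := (gammaLP A xs ys).
Local Notation K := (specnorm A).

Let fxs : primal_feasible A b xs := xs_opt.1.
Let fys : dual_feasible A c ys := ys_opt.1.
Let K_ge0 : 0 <= K := specnorm_ge0 A.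

Lemma lam_ge0 : 0 <= lam.
Proof.
apply: minR_ge0 => x; rewrite !mem_cat => /orP[|/orP[|/orP[]]] /mapP[k _ ->].
- by case: fxs.
- by case: fys.
- exact: slack_ge0.
- exact: dslack_ge0.
Qed.

Lemma lam_le_xs i : i \in U -> lam <= xs i 0.
Proof. by move=> Ui; rewrite minR_le // mem_cat (fintype.image_f (fun k => xs k 0)). Qed.

Lemma lam_le_ys j : j \in V -> lam <= ys 0 j.
Proof. by move=> Vj; rewrite minR_le // !mem_cat (fintype.image_f (fun k => ys 0 k)) ?orbT. Qed.

Lemma lam_le_slack j : j \notin V -> lam <= slack A b xs j.
Proof.
by move=> Vj; rewrite minR_le // !mem_cat (fintype.image_f (slack A b xs)) ?orbT // finset.in_setC.
Qed.

Lemma lam_le_dslack i : i \notin U -> lam <= dslack A c ys i.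
Proof.
by move=> Ui; rewrite minR_le // !mem_cat (fintype.image_f (dslack A c ys)) ?orbT // finset.in_setC.
Qed.

Lemma xs_out i : i \notin U -> xs i 0 = 0.
Proof.
rewrite inE -leNgt => xs_le0; apply/eqP; rewrite eq_le xs_le0.
by case: fxs => _ /(_ i).
Qed.

Lemma gap_at_optimum x : cx c xs - cx c x =
  \sum_j ys 0 j * slack A b x j + \sum_i dslack A c ys i * x i 0.
Proof. by rewrite -(strong_duality xs_opt ys_opt) (duality_gap A). Qed.

Lemma complementary_slackness :
  (forall j, ys 0 j * slack A b xs j = 0) /\ (forall i, dslack A c ys i * xs i 0 = 0).
Proof.
have term1_ge0 j : 0 <= ys 0 j * slack A b xs j.
  by rewrite mulr_ge0 ?slack_ge0 //; case: fys.
have term2_ge0 i : 0 <= dslack A c ys i * xs i 0.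
  by rewrite mulr_ge0 ?dslack_ge0 //; case: fxs.
have /esym/eqP := gap_at_optimum xs.
rewrite subrr paddr_eq0 ?sumr_ge0 // => /andP[/eqP sum1 /eqP sum2].
by split=> k; [exact: (psumr_eq0P _ sum1) | exact: (psumr_eq0P _ sum2)].
Qed.

Lemma slack_xs_eq0 j : j \in V -> slack A b xs j = 0.
Proof.
rewrite inE => ys_gt0; have /eqP := complementary_slackness.1 j.
by rewrite mulf_eq0 gt_eqF //= => /eqP.
Qed.

Lemma gam_le_dist k : k \in U -> gam <= distVk A U V k.
Proof. by move=> Uk; rewrite minR_le // (fintype.image_f (distVk A U V)). Qed.

Lemma dist_le k (t : 'I_n -> R) : distVk A U V k <=
  Num.sqrt (\sum_(j in V) (A j k - \sum_(i in U :\ k) t i * A j i) ^+ 2).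
Proof.
apply: ge_inf; last by exists t.
by exists 0 => _ [t' _ <-]; apply: sqrtr_ge0.
Qed.

(* [A_{V,U} z / z k] is the residual of column [k] against the other columns
   of [A_{V,U}]. *)
Lemma gam_abs_le k (z : 'I_n -> R) : k \in U ->
  gam * `|z k| <= Num.sqrt (\sum_(j in V) (\sum_(i in U) A j i * z i) ^+ 2).
Proof.
move=> Uk; have [->|zk_neq0] := eqVneq (z k) 0; first by rewrite normr0 mulr0 sqrtr_ge0.
have := le_trans (gam_le_dist Uk) (dist_le k (fun i => - z i / z k)).
have residualE j : A j k - \sum_(i in U :\ k) (- z i / z k) * A j i =
                   (\sum_(i in U) A j i * z i) / z k.
  rewrite [in RHS](bigD1 k) //= mulrDl mulfK // mulr_suml -sumrN.
  rewrite [in RHS](eq_bigl (fun i => i \in U :\ k)) => [|i]; last by rewrite in_setD1 andbC.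
  by congr (_ + _); apply: eq_bigr => i _; field.
under eq_bigr do rewrite residualE expr_div_n.
rewrite -mulr_suml sqrtrM ?(sumsq_ge0 (mem V)) // -exprVn sqrtr_sqr normrV ?unitfE //.
by rewrite ler_pdivlMr ?normr_gt0.
Qed.

Hypothesis gam_gt0 : 0 < gam.

Lemma card_U_le_V : (#|U| <= #|V|)%N.
Proof.
rewrite leqNgt; apply/negP => /(underdetermined_nontrivial_solution (fun j i => A j i)).
case=> z [[k Uk zk_neq0] _ Az0].
have := gam_abs_le z Uk; rewrite big1 => [|j Vj]; last by rewrite Az0 // expr0n.
by rewrite sqrtr0 leNgt mulr_gt0 ?normr_gt0.
Qed.

Lemma gam_le_specnorm : gam <= K.
Proof.
have [k Uk] : exists k, k \in U.
  apply/set0Pn; apply: contraTneq gam_gt0 => U0.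
  by rewrite /gammaLP U0 /image_mem enum_set0 ltxx.
apply: le_trans (gam_le_dist Uk) (le_trans (dist_le k (fun _ => 0)) _).
apply: le_trans (col_norm_le_specnorm A k); rewrite ler_sqrt ?(sumsq_ge0 xpredT) //.
rewrite (eq_bigr (fun j => A j k ^+ 2)) => [|j _]; first exact: sumsq_subset.
by rewrite big1 ?subr0 // => i _; rewrite mul0r.
Qed.

Hypothesis lam_gt0 : 0 < lam.

(* Moving [ys] along a direction [w] supported on [V] with [w A] vanishing on
   [U] keeps it dual optimal for small steps. *)
Section DualShift.
Variable w : 'I_m -> R.
Hypothesis w_out : forall j, j \notin V -> w j = 0.
Hypothesis wA_U : forall i, i \in U -> \sum_j w j * A j i = 0.

Lemma sum_shift eps (F : 'I_m -> R) :
  \sum_j (\row_j (ys 0 j + eps * w j)) 0 j * F j =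
  \sum_j ys 0 j * F j + eps * \sum_j w j * F j.
Proof.
rewrite mulr_sumr -big_split; apply: eq_bigr => j _.
by rewrite mxE mulrDl mulrA.
Qed.

Lemma shift_dual_feasible :
  exists2 eps, 0 < eps & dual_feasible A c (\row_j (ys 0 j + eps * w j)).
Proof.
pose f (s : 'I_m + 'I_n) := match s with
  | inl j => w j | inr i => \sum_j w j * A j i end.
have [eps eps_gt0 eps_small] := exists_small_scale f lam_gt0.
exists eps => //; split=> [i|j].
  rewrite sum_shift; have [/wA_U->|Ui] := boolP (i \in U).
    by rewrite mulr0 addr0; case: fys.
  have := lam_le_dslack Ui; have := eps_small (inr i); rewrite /dslack /=.
  have := ler_norm (- \sum_j w j * A j i); rewrite normrN; nra.
rewrite mxE; have [Vj|/w_out->] := boolP (j \in V); last first.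
  by rewrite mulr0 addr0; case: fys.
have := lam_le_ys Vj; have := eps_small (inl j) => /=.
have := ler_norm (- w j); rewrite normrN; nra.
Qed.

Lemma shift_dual_value eps : yb b (\row_j (ys 0 j + eps * w j)) = yb b ys.
Proof.
rewrite /yb sum_shift -[RHS]addr0; congr (_ + _).
have -> : \sum_j w j * b j 0 = \sum_j w j * \sum_i A j i * xs i 0.
  apply: eq_bigr => j _; have [Vj|/w_out->] := boolP (j \in V); last by rewrite !mul0r.
  by have := slack_xs_eq0 Vj; rewrite /slack => /eqP; rewrite subr_eq0 => /eqP->.
under eq_bigr do rewrite mulr_sumr; rewrite exchange_big big1 ?mulr0 // => i _.
under eq_bigr do rewrite mulrA; rewrite -mulr_suml.
by have [/wA_U->|/xs_out->] := boolP (i \in U); rewrite ?mul0r ?mulr0.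
Qed.

End DualShift.

Hypothesis ys_unique : forall y, dual_optimal A b c y -> y = ys.

Lemma card_V_le_U : (#|V| <= #|U|)%N.
Proof.
rewrite leqNgt; apply/negP => /(underdetermined_nontrivial_solution (fun i j => A j i)).
case=> w [[j0 Vj0 wj0_neq0] w_out wA_V].
have wA_U i : i \in U -> \sum_j w j * A j i = 0.
  move=> Ui; rewrite -[RHS](wA_V i Ui) (bigID (mem V)) /= [X in _ + X]big1 => [|j /w_out->].
    by rewrite addr0; apply: eq_bigr => j _; rewrite mulrC.
  by rewrite mul0r.
have [eps eps_gt0 feasible] := shift_dual_feasible w_out wA_U.
have optimal : dual_optimal A b c (\row_j (ys 0 j + eps * w j)).
  by split=> // y fy; rewrite shift_dual_value //; apply: ys_opt.2.
have /rowP/(_ j0) := ys_unique optimal; rewrite mxE => /eqP.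
by rewrite -subr_eq0 addrAC subrr add0r mulf_eq0 gt_eqF // (negbTE wj0_neq0).
Qed.

Lemma card_UV : (#|~: U| + #|V| = n)%N.
Proof.
have card_eq : #|U| = #|V| by apply/anti_leq; rewrite card_U_le_V card_V_le_U.
by rewrite -card_eq addnC cardsC card_ord.
Qed.

Definition selected_sum (x : 'cV[R]_n) : R :=
  \sum_(j in V) slack A b x j + \sum_(i in ~: U) x i 0.

Section NearOptimal.
Variable x : 'cV[R]_n.
Hypothesis fx : primal_feasible A b x.

Let x_ge0 i : 0 <= x i 0 := fx.2 i.

Let slack_sum_ge0 : 0 <= \sum_(j in V) slack A b x j.
Proof. by apply: sumr_ge0 => j _; apply: slack_ge0. Qed.

Let off_sum_ge0 : 0 <= \sum_(i in ~: U) x i 0.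
Proof. exact: sumr_ge0. Qed.

Lemma lp_value_le_selected_sum s : selected U V s -> lp_value A b x s <= selected_sum x.
Proof.
rewrite /selected_sum; case: s => [i|j] /= sel.
  apply: ler_wpDl slack_sum_ge0 _.
  by apply: (ler_psum_term (f := fun k => x k 0)) => [k _|]; rewrite ?x_ge0 ?finset.in_setC.
apply: ler_wpDr off_sum_ge0 _.
by apply: (ler_psum_term (f := slack A b x)) => // *; apply: slack_ge0.
Qed.

Lemma lam_selected_sum_le_gap : lam * selected_sum x <= cx c xs - cx c x.
Proof.
rewrite gap_at_optimum /selected_sum mulrDr !mulr_sumr; apply: lerD.
  rewrite [leRHS](bigID (mem V)) /=; apply: ler_wpDr.
    by apply: sumr_ge0 => j _; rewrite mulr_ge0 ?slack_ge0 //; case: fys.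
  by apply: ler_sum => j Vj; rewrite ler_wpM2r ?slack_ge0 ?lam_le_ys.
rewrite [leRHS](bigID (mem (~: U))) /=; apply: ler_wpDr.
  by apply: sumr_ge0 => i _; rewrite mulr_ge0 ?dslack_ge0.
apply: ler_sum => i; rewrite finset.in_setC => Ui.
by rewrite ler_wpM2r ?lam_le_dslack.
Qed.

Lemma residual_on_V j : j \in V ->
  \sum_(i in U) A j i * (x i 0 - xs i 0) =
  - slack A b x j - \sum_(i in ~: U) A j i * x i 0.
Proof.
move=> Vj; have := slack_xs_eq0 Vj; rewrite /slack => /eqP; rewrite subr_eq0 => /eqP->.
have xs_sum : \sum_i A j i * xs i 0 = \sum_(i in U) A j i * xs i 0.
  rewrite (bigID (mem U)) /= [X in _ + X]big1 ?addr0 // => i /xs_out->.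
  by rewrite mulr0.
have x_sum : \sum_i A j i * x i 0 =
    \sum_(i in U) A j i * x i 0 + \sum_(i in ~: U) A j i * x i 0.
  rewrite (bigID (mem U)) /=; congr (_ + _).
  by apply: eq_bigl => i; rewrite finset.in_setC.
under eq_bigr do rewrite mulrBr.
rewrite sumrB xs_sum x_sum; ring.
Qed.

Lemma gam_abs_sub_xs_le k : k \in U ->
  gam * `|x k 0 - xs k 0| <= (1 + K) * selected_sum x.
Proof.
move=> Uk; apply: le_trans (gam_abs_le (fun i => x i 0 - xs i 0) Uk) _.
pose w : 'cV[R]_n := \col_i (if i \in U then 0 else x i 0).
have Aw j : (A *m w) j 0 = \sum_(i in ~: U) A j i * x i 0.
  rewrite mxE (bigID (mem U)) /= big1 ?add0r => [|i Ui]; last by rewrite mxE Ui mulr0.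
  by apply: eq_big => [i|i Ui]; rewrite ?finset.in_setC // mxE (negbTE Ui).
rewrite (eq_bigr (fun j => (- slack A b x j + - (A *m w) j 0) ^+ 2)) => [|j Vj]; last first.
  by rewrite residual_on_V // Aw.
apply: le_trans (minkowski _ _ _) _.
under eq_bigr do rewrite sqrrN; under [X in _ + Num.sqrt X]eq_bigr do rewrite sqrrN.
have slack_le : Num.sqrt (\sum_(j in V) slack A b x j ^+ 2) <= \sum_(j in V) slack A b x j.
  by apply: sqrt_sumsq_le_sum => j _; apply: slack_ge0.
have w_ge0 i : 0 <= w i 0 by rewrite mxE; case: ifP.
have Aw_le : Num.sqrt (\sum_(j in V) (A *m w) j 0 ^+ 2) <= K * \sum_(i in ~: U) x i 0.
  apply: (@le_trans _ _ (norm2 (A *m w))).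
    by rewrite ler_sqrt ?(sumsq_ge0 xpredT) //; apply: sumsq_subset.
  apply: le_trans (norm2_mulmx_le A w) (ler_wpM2l K_ge0 _).
  apply: le_trans (sqrt_sumsq_le_sum (P := xpredT) (fun i _ => w_ge0 i)) _.
  rewrite (bigID (mem U)) /= big1 ?add0r => [|i Ui]; last by rewrite mxE Ui.
  rewrite (eq_big (mem (~: U)) (fun i => x i 0)) // => [i|i Ui]; first by rewrite !inE.
  by rewrite mxE (negbTE Ui).
have := mulr_ge0 K_ge0 slack_sum_ge0; have := K_ge0.
have := slack_sum_ge0; have := off_sum_ge0; rewrite /selected_sum; nra.
Qed.

Local Notation kappa := (Num.max 1 (Num.sqrt n%:R * K)).
Local Notation radius := ((1 + K) * selected_sum x / gam).

Let S_ge0 : 0 <= selected_sum x := addr_ge0 slack_sum_ge0 off_sum_ge0.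

Lemma selected_sum_le_radius : selected_sum x <= radius.
Proof.
rewrite ler_pdivlMr //; have := gam_le_specnorm; have := S_ge0; have := K_ge0.
nra.
Qed.

Lemma abs_sub_xs_le_radius i : `|x i 0 - xs i 0| <= radius.
Proof.
have [Ui|Ui] := boolP (i \in U); first by rewrite ler_pdivlMr // mulrC gam_abs_sub_xs_le.
rewrite xs_out // subr0 ger0_norm //.
exact: le_trans (lp_value_le_selected_sum (s := inl i) Ui) selected_sum_le_radius.
Qed.

Let radius_ge0 : 0 <= radius :=
  divr_ge0 (mulr_ge0 (addr_ge0 ler01 K_ge0) S_ge0) (ltW gam_gt0).

Lemma radius_le_kappa_radius : radius <= kappa * radius.
Proof. by apply: ler_peMl radius_ge0 _; rewrite le_max lexx. Qed.

Lemma small_radius_of_gap :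
  cx c xs - cx c x < lam ^+ 2 * gam / (2 * kappa * (1 + K)) -> kappa * radius < lam / 2.
Proof.
set D := 2 * kappa * (1 + K) => gap_lt.
have D_gt0 : 0 < D := stability_denominator_gt0 A.
have SD_lt : selected_sum x * D < lam * gam.
  have := le_lt_trans lam_selected_sum_le_gap gap_lt; rewrite ltr_pdivlMr //.
  by rewrite -mulrA expr2 -mulrA ltr_pM2l.
have -> : kappa * radius = selected_sum x * D / (2 * gam).
  by rewrite /D; field; rewrite gt_eqF.
rewrite ltr_pdivrMr ?mulr_gt0 //.
by have -> : lam / 2 * (2 * gam) = lam * gam by field.
Qed.

Hypothesis small_radius : kappa * radius < lam / 2.

Lemma radius_lt : radius < lam / 2.
Proof. exact: le_lt_trans radius_le_kappa_radius small_radius. Qed.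

Lemma unselected_gt t : ~~ selected U V t -> lam / 2 < lp_value A b x t.
Proof.
case: t => [k|j] /= unsel.
  have := lam_le_xs (negbNE unsel); have := abs_sub_xs_le_radius k.
  rewrite ler_norml => /andP[+ _]; have := radius_lt; set r := radius; lra.
have slackE : slack A b x j = slack A b xs j - (A *m (x - xs)) j 0.
  rewrite /slack mxE [X in _ = _ - X](eq_bigr (fun k => A j k * x k 0 - A j k * xs k 0)).
    by rewrite sumrB; ring.
  by move=> k _; rewrite !mxE mulrBr.
have Ax_le : `|(A *m (x - xs)) j 0| <= kappa * radius.
  apply: le_trans (abs_entry_le_norm2 _ _) (le_trans (norm2_mulmx_le A _) _).
  apply: le_trans (ler_wpM2l K_ge0 (norm2_le_sqrt_dim (B := radius) _)) _.
    by move=> i; rewrite !mxE abs_sub_xs_le_radius.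
  by rewrite mulrA [K * _]mulrC ler_wpM2r ?le_max ?lexx ?orbT.
have := lam_le_slack unsel; have := ler_norm ((A *m (x - xs)) j 0).
by rewrite slackE; move: Ax_le small_radius; set r := kappa * radius; lra.
Qed.

Lemma UV_of_is_near : UV_of_is A b x U V.
Proof.
split=> [|s t sel unsel]; first exact: card_UV.
apply: le_lt_trans (lp_value_le_selected_sum sel) (lt_trans _ (unselected_gt unsel)).
exact: le_lt_trans selected_sum_le_radius radius_lt.
Qed.

End NearOptimal.

End Stability.

Theorem mainTheorem4 (R : realType) (m n : nat) (A : 'M[R]_(m, n))
    (b : 'cV[R]_m) (c : 'rV[R]_n) (xs : 'cV[R]_n) (ys : 'rV[R]_m) :
  primal_optimal A b c xs ->
  (forall x, primal_optimal A b c x -> x = xs) ->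
  dual_optimal A b c ys ->
  (forall y, dual_optimal A b c y -> y = ys) ->
  (((lambdaLP A b c xs ys) ^+ 2 * gammaLP A xs ys /
     (2 * Num.max 1 (Num.sqrt n%:R * specnorm A) * (1 + specnorm A)))%:E
   <= deltaLP A b c xs ys)%E.
Proof.
move=> xs_opt _ ys_opt ys_unique.
set d := _ / _.
suff d_in : delta_set A b c xs ys d by apply: ereal_sup_ubound; exists d.
move=> x fx gap_lt.
have : 0 < d by apply: le_lt_trans gap_lt; rewrite subr_ge0; apply: xs_opt.2.
rewrite /d pmulr_lgt0 ?invr_gt0 ?stability_denominator_gt0 //.
case/(pos_of_sqr_mul_pos (lam_ge0 xs_opt ys_opt)) => lam_gt0 gam_gt0.
have small := small_radius_of_gap xs_opt ys_opt gam_gt0 lam_gt0 fx gap_lt.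
exact: (UV_of_is_near xs_opt ys_opt gam_gt0 lam_gt0 ys_unique fx small).
Qed.
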